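(* Let $d\ge 2$ and $r=r_c=\sqrt{2}$. Consider random sequential adsorption on $S^{d-1}$ with parameter $r$, as defined in the context. Then with probability $1$ the process terminates, and the final (complete) parking consists of exactly $d+1$ points.
   Context: Let $d\ge 2$ and let $S^{d-1}=\{x\in\mathbb{R}^d:|x|=1\}$ be the unit sphere centred at the origin, with $|\cdot|$ the Euclidean norm on $\mathbb{R}^d$. For $r>0$, a parking of radius $r$ on $S^{d-1}$ is a finite set of points $x_1,\dots,x_n\in S^{d-1}$ such that $|x_i-x_j|\ge r$ for all $i\ne j$. Note that $|x_i-x_j|\ge r$ is equivalent to $x_i\cdot x_j\le 1-\tfrac12 r^2$; in particular, for $r=\sqrt2$ it is equivalent to $x_i\cdot x_j\le 0$. Random sequential adsorption with parameter $r$ is the following random process. Start with the empty set. Given the currently parked points $x_1,\dots,x_n$, let $A_n=\{x\in S^{d-1}: |x-x_i|\ge r \text{ for all } i\le n\}$ be the available set ($A_0=S^{d-1}$). If $A_n$ has positive $(d-1)$-dimensional surface measure, draw $x_{n+1}$ from the normalized surface measure restricted to $A_n$ (independently of everything else given the past) and continue; otherwise stop. The final set of parked points is the resulting complete parking. *)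

From HB Require Import structures.
From mathcomp Require Import all_boot all_order all_algebra.
From mathcomp Require Import all_classical all_reals.
From mathcomp Require Import ereal topology normedtype numfun measure
  lebesgue_measure lebesgue_integral.
Set Implicit Arguments. Unset Strict Implicit. Unset Printing Implicit Defensive.
Import Order.TTheory GRing.Theory Num.Theory.
Local Open Scope ring_scope.
Local Open Scope classical_set_scope.

Section RSA.
Variable R : realType.

Definition dotp (d : nat) (x y : 'rV[R]_d) : R := (x *m y^T) 0 0.
Definition enorm (d : nat) (x : 'rV[R]_d) : R := Num.sqrt (dotp x x).

Definition sphere (d : nat) : set 'rV[R]_d := [set x | dotp x x = 1].

(* iterated Lebesgue integral over the coordinates 0..n-1 (Lebesgue measure
   on R^n, via Tonelli) *)
Fixpoint iint (n : nat) (f : (nat -> R) -> \bar R) : \bar R :=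
  match n with
  | 0 => f (fun _ => 0)
  | n'.+1 => (\int[@lebesgue_measure R]_t
                iint n' (fun g => f (fun i => if i == n' then t else g i)))%E
  end.

Definition leb_int (d : nat) (f : 'rV[R]_d -> \bar R) : \bar R :=
  iint d (fun g => f (\row_(i < d) g i)).

(* integral over S^{d-1} with respect to the cone measure
   sigma(A) = lambda_d({t x | 0 < t <= 1, x in A}); this is (1/d times) the
   (d-1)-dimensional surface measure on S^{d-1}. Only ratios of it are used,
   so the constant factor is irrelevant. *)
Definition sph_int (d : nat) (f : 'rV[R]_d -> \bar R) : \bar R :=
  leb_int (fun x => if (0 < dotp x x) && (dotp x x <= 1)
                    then f ((enorm x)^-1 *: x) else 0%E).

Definition sph_meas (d : nat) (A : set 'rV[R]_d) : \bar R :=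
  sph_int (fun y => (\1_A y)%:E).

Definition avail (d : nat) (r : R) (s : seq 'rV[R]_d) : set 'rV[R]_d :=
  [set x | sphere x /\ forall y, y \in s -> r <= enorm (x - y)].

(* rsa_stop_prob d r k s = probability that random sequential adsorption with
   parameter r, started from the currently parked points s, parks exactly k
   further points and then stops (i.e. the final parking has size size s + k).
   A new point is drawn from the normalized surface measure restricted to the
   available set, as long as that set has positive measure. *)
Fixpoint rsa_stop_prob (d : nat) (r : R) (k : nat) (s : seq 'rV[R]_d)
  : \bar R :=
  let m := sph_meas (avail r s) in
  match k with
  | 0 => if (0 < m)%E then 0%E else 1%E
  | k'.+1 =>
      if (0 < m)%E then
        ((fine m)^-1%:E *
         sph_int (fun y => (\1_(avail r s) y)%:E * rsa_stop_prob r k' (y :: s)))%E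
      else 0%E
  end.

End RSA.

From HB Require Import structures.
From mathcomp Require Import all_boot all_order all_algebra.
From mathcomp Require Import all_classical all_reals.
From mathcomp Require Import ereal topology normedtype numfun measure
  lebesgue_measure lebesgue_integral measurable_realfun.
From mathcomp Require Import lra ring.
Import Order.TTheory GRing.Theory Num.Theory.
Set Implicit Arguments. Unset Strict Implicit. Unset Printing Implicit Defensive.
Local Open Scope ring_scope.
Local Open Scope classical_set_scope.

(* For r = sqrt 2 two points of the sphere are compatible exactly when they
   make a non-acute angle, so parkings are families of pairwise non-acute unit
   vectors.  While at most d points are parked they almost surely lie in an
   open half-space {x | z . x < 0}: a new point keeps this property unless it
   falls on the hyperplane orthogonal to all previous points, a null set.
   Such a half-space condition makes the available set contain a nonempty
   open piece of the sphere, so the process continues.  Conversely, d + 1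
   pairwise non-acute vectors of R^d satisfy a linear relation, and a Gram
   computation shows that one of them is orthogonal to every point non-acute
   to all of them: the available set then lies in a great sphere and is null,
   so the process stops with exactly d + 1 points. *)

Section IteratedIntegral.
Variable R : realType.
Local Notation leb := (@lebesgue_measure R).
Import HBNNSimple.

(* No measurability is assumed: the comparison goes through the simple
   functions below [f1], multiplied by the indicator of [~` [set t0]]. *)
Lemma ge0_le_integral_but1 (t0 : R) (f1 f2 : R -> \bar R) :
  (forall t, (0 <= f1 t)%E) -> (forall t, (0 <= f2 t)%E) ->
  (forall t, t <> t0 -> (f1 t <= f2 t)%E) ->
  (\int[leb]_t f1 t <= \int[leb]_t f2 t)%E.
Proof.
move=> f10 f20 f12; rewrite !ge0_integralTE//.
apply: ge_ereal_sup => _ [h /= hf1 <-].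
have mN : measurable (~` (@set1 (measurableTypeR R) t0)).
  by apply: measurableC; exact: measurable_set1.
pose h' := mul_nnsfun h (indic_nnsfun R mN).
apply: ereal_sup_ubound; exists h'.
  move=> x /=; rewrite /h' /= mindicE.
  have [->|/eqP xt] := eqVneq x t0; first by rewrite memNset //= mulr0 f20.
  by rewrite mem_set //= mulr1 (le_trans (hf1 x)) ?f12.
have sintegralE (k : {nnsfun measurableTypeR R >-> R}) :
    sintegral leb k = (\int[leb]_x (k x)%:E)%E.
  by rewrite integral_nnsfun// patch_setT.
rewrite !sintegralE; apply: ge0_ae_eq_integral => //.
- exact/measurable_EFinP/measurable_funP.
- exact/measurable_EFinP/measurable_funP.
- by move=> x _; rewrite lee_fin.
- by move=> x _; rewrite lee_fin.
exists [set t0]; split => //; first exact: lebesgue_measure_set1.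
move=> x /= Hx; apply: contrapT => xt; apply: Hx => _.
by rewrite /h' /= mindicE mem_set ?mulr1.
Qed.

Lemma ge0_eq_integral_but1 (t0 : R) (f1 f2 : R -> \bar R) :
  (forall t, (0 <= f1 t)%E) -> (forall t, (0 <= f2 t)%E) ->
  (forall t, t <> t0 -> f1 t = f2 t) ->
  (\int[leb]_t f1 t = \int[leb]_t f2 t)%E.
Proof.
move=> f10 f20 f12; apply/le_anti/andP.
by split; apply: (@ge0_le_integral_but1 t0) => // t /f12 ->.
Qed.

Lemma eq_iint n (f1 f2 : (nat -> R) -> \bar R) :
  f1 =1 f2 -> iint n f1 = iint n f2.
Proof. by move=> /funext ->. Qed.

Lemma iint_eq0 n (f : (nat -> R) -> \bar R) :
  (forall g, f g = 0%E) -> iint n f = 0%E.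
Proof.
elim: n f => [|n IH] f f0 /=; first exact: f0.
by rewrite (_ : (fun t => _) = cst 0%E) ?integral0//; apply/funext => t; apply: IH.
Qed.

Lemma iint_ge0 n (f : (nat -> R) -> \bar R) :
  (forall g, (0 <= f g)%E) -> (0 <= iint n f)%E.
Proof.
elim: n f => [|n IH] f f0 /=; first exact: f0.
by apply: integral_ge0 => t _; apply: IH.
Qed.

Lemma ge0_le_iint n (f1 f2 : (nat -> R) -> \bar R) :
  (forall g, (0 <= f1 g)%E) -> (forall g, (f1 g <= f2 g)%E) ->
  (iint n f1 <= iint n f2)%E.
Proof.
elim: n f1 f2 => [|n IH] f1 f2 f10 f12 /=; first exact: f12.
apply: (@ge0_le_integral_but1 0) => [t|t|t _]; first exact: iint_ge0.
  by apply: iint_ge0 => g; exact: le_trans (f10 _) (f12 _).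
exact: IH.
Qed.

(* If the outermost variable is the only one with a nonzero coefficient, the
   hyperplane meets its axis in a single, Lebesgue-null, point. *)
Lemma ge0_eq_iint_off_hyperplane n (v : nat -> R) (c : R)
    (f1 f2 : (nat -> R) -> \bar R) :
  (exists2 i, (i < n)%N & v i != 0) ->
  (forall g, (0 <= f1 g)%E) -> (forall g, (0 <= f2 g)%E) ->
  (forall g : nat -> R, \sum_(i < n) v i * g i != c -> f1 g = f2 g) ->
  iint n f1 = iint n f2.
Proof.
elim: n v c f1 f2 => [|n IH] v c f1 f2 [i ilt vi] f10 f20 f12 /=; first by [].
have sumE (g : nat -> R) t :
    \sum_(i < n.+1) v i * (if i == n :> nat then t else g i) =
    \sum_(i < n) v i * g i + v n * t.
  rewrite big_ord_recr /= eqxx; congr (_ + _); apply: eq_bigr => j _.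
  by rewrite (ltn_eqF (ltn_ord j)).
have [[j jlt vj]|vlast] := pselect (exists2 j, (j < n)%N & v j != 0).
  congr integral; apply/funext => t.
  apply: (IH v (c - v n * t)) => // [|g hg]; first by exists j.
  by apply: f12; rewrite sumE; apply: contra hg => /eqP <-; rewrite addrK.
have v0 j : (j < n)%N -> v j = 0.
  by move=> jn; apply/eqP/negPn/negP => vj; apply: vlast; exists j.
have vn : v n != 0.
  by move: ilt vi; rewrite ltnS leq_eqVlt => /orP[/eqP -> //|/v0 ->]; rewrite eqxx.
apply: (@ge0_eq_integral_but1 (c / v n)) => [t|t|t tc]; try exact: iint_ge0.
apply: eq_iint => g; apply: f12; rewrite sumE big1 ?add0r => [|k _]; last first.
  by rewrite v0 ?mul0r.
by apply: contra_notN tc => /eqP <-; rewrite mulrAC mulfV // mul1r.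
Qed.

Definition cube_indic n (a : nat -> R) (e : R) (g : nat -> R) : R :=
  \prod_(i < n) \1_(`[a i, a i + e]) (g i).

Lemma cube_indic01 n (a : nat -> R) e (g : nat -> R) : cube_indic n a e g = 0 \/ cube_indic n a e g = 1.
Proof.
rewrite /cube_indic; elim/big_ind: _ => [|x y [->|->] [->|->]|i _];
  rewrite ?mulr0 ?mul0r ?mulr1; auto.
by rewrite indicE; case: (_ \in _); auto.
Qed.

Lemma cube_indic_ge0 n (a : nat -> R) e (g : nat -> R) : 0 <= cube_indic n a e g.
Proof. by case: (cube_indic01 n a e g) => ->. Qed.

Lemma cube_indic_eq1P n (a : nat -> R) e (g : nat -> R) :
  reflect (forall i : 'I_n, a i <= g i <= a i + e) (cube_indic n a e g == 1).
Proof.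
rewrite /cube_indic; apply: (iffP idP) => [/eqP|h].
  move=> h1 i; have : \1_(`[a i, a i + e]) (g i) = 1 :> R.
    move: h1; rewrite (bigD1 i)//= indicE.
    by case: (_ \in _) => //; rewrite mul0r => /eqP; rewrite eq_sym oner_eq0.
  by rewrite indicE; case: (boolP (_ \in _)) => [|_ /eqP]; 
    [rewrite inE /= in_itv|rewrite eq_sym oner_eq0].
rewrite big1 // => i _; rewrite indicE mem_set//= in_itv /=; exact: h.
Qed.

Lemma iint_cube n (a : nat -> R) (e : R) : 0 <= e ->
  iint n (fun g => (cube_indic n a e g)%:E) = (e ^+ n)%:E.
Proof.
move=> e0; elim: n => [|n IH] /=; first by rewrite /cube_indic big_ord0.
have slice t : iint n (fun g =>
    (cube_indic n.+1 a e (fun i => if i == n then t else g i))%:E) =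
    ((e ^+ n)%:E * (\1_(`[a n, a n + e]) t)%:E)%E.
  under eq_iint => g.
    rewrite /cube_indic big_ord_recr /= eqxx.
    under eq_bigr => j _ do rewrite (ltn_eqF (ltn_ord j)).
    over.
  rewrite indicE; case: (_ \in _); last first.
    by rewrite mule0; apply: iint_eq0 => g; rewrite mulr0.
  by rewrite -IH mule1; apply: eq_iint => g; rewrite mulr1.
rewrite (_ : (fun t => _) = (fun t => (e ^+ n)%:E * (\1_(`[a n, a n + e]) t)%:E)%E);
  last exact/funext/slice.
rewrite ge0_integralZl_EFin//; last 2 first.
- by apply/measurable_EFinP; apply: measurable_indic.
- exact: exprn_ge0.
rewrite integral_indic// setIT [X in (_ * X)%E]lebesgue_measure_itv /= lte_fin ltrDl.
have [e_gt0|] := ltP 0 e; first by rewrite -EFinD addrAC subrr add0r -EFinM -exprSr.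
move=> e_le0; have -> : e = 0 by apply/le_anti/andP.
by rewrite mule0 expr0n.
Qed.

End IteratedIntegral.

Section DotProduct.
Variables (R : realType) (d : nat).
Implicit Types x y z u v : 'rV[R]_d.

Lemma dotpE x y : dotp x y = \sum_(j < d) x 0 j * y 0 j.
Proof. by rewrite /dotp !mxE; apply: eq_bigr => j _; rewrite mxE. Qed.

Lemma dotpC x y : dotp x y = dotp y x.
Proof. by rewrite !dotpE; apply: eq_bigr => j _; rewrite mulrC. Qed.

Lemma dotpDl x y z : dotp (x + y) z = dotp x z + dotp y z.
Proof. by rewrite !dotpE -big_split; apply: eq_bigr => j _; rewrite mxE mulrDl. Qed.

Lemma dotpNl x z : dotp (- x) z = - dotp x z.
Proof. by rewrite !dotpE -sumrN; apply: eq_bigr => j _; rewrite mxE mulNr. Qed.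

Lemma dotpBl x y z : dotp (x - y) z = dotp x z - dotp y z.
Proof. by rewrite dotpDl dotpNl. Qed.

Lemma dotpZl a x z : dotp (a *: x) z = a * dotp x z.
Proof. by rewrite !dotpE mulr_sumr; apply: eq_bigr => j _; rewrite mxE mulrA. Qed.

Lemma dotpBr x y z : dotp z (x - y) = dotp z x - dotp z y.
Proof. by rewrite dotpC dotpBl !(dotpC z). Qed.

Lemma dotpZr a x z : dotp z (a *: x) = a * dotp z x.
Proof. by rewrite dotpC dotpZl dotpC. Qed.

Lemma dotp0l z : dotp 0 z = 0.
Proof. by rewrite -(scale0r 0) dotpZl mul0r. Qed.

Lemma dotp_suml I (r : seq I) (P : pred I) (F : I -> 'rV[R]_d) z :
  dotp (\sum_(i <- r | P i) F i) z = \sum_(i <- r | P i) dotp (F i) z.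
Proof. by elim/big_rec2: _ => [|i a b _ <-]; rewrite ?dotp0l ?dotpDl. Qed.

Lemma sqr_coord_le_dotpp x j : x 0 j ^+ 2 <= dotp x x.
Proof.
rewrite dotpE (bigD1 j)//= -expr2 lerDl.
by apply: sumr_ge0 => k _; rewrite -expr2 sqr_ge0.
Qed.

Lemma dotpp_ge0 x : 0 <= dotp x x.
Proof. by rewrite dotpE; apply: sumr_ge0 => j _; rewrite -expr2 sqr_ge0. Qed.

Lemma dotpp_eq0 x : (dotp x x == 0) = (x == 0).
Proof.
apply/idP/eqP => [|->]; last by rewrite dotp0l.
rewrite dotpE psumr_eq0 => [/allP x0|j _]; last by rewrite -expr2 sqr_ge0.
apply/rowP => j; rewrite mxE; have := x0 j (mem_index_enum _).
by rewrite implyTb mulf_eq0 orbb => /eqP.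
Qed.

Lemma dotpp_le1_coord x j : dotp x x <= 1 -> `|x 0 j| <= 1.
Proof.
move=> x1; rewrite -(ler_pXn2r (n := 2)) ?nnegrE// expr1n real_normK ?num_real//.
exact: le_trans (sqr_coord_le_dotpp x j) x1.
Qed.

Lemma dotpp_le_sup x b : (forall j, `|x 0 j| <= b) -> dotp x x <= d%:R * b ^+ 2.
Proof.
move=> xb; have -> : d%:R * b ^+ 2 = \sum_(j < d) b ^+ 2.
  by rewrite sumr_const card_ord mulr_natl.
rewrite dotpE.
apply: ler_sum => j _; rewrite -expr2 -real_normK ?num_real//.
by rewrite lerXn2r ?nnegrE ?(le_trans _ (xb j)).
Qed.

Lemma abs_dotp_le_sup u x b : (forall j, `|u 0 j| <= b) -> dotp x x = 1 ->
  `|dotp u x| <= d%:R * b.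
Proof.
move=> ub x1; have -> : d%:R * b = \sum_(j < d) b.
  by rewrite sumr_const card_ord mulr_natl.
rewrite dotpE.
apply: le_trans (ler_norm_sum _ _ _) _; apply: ler_sum => j _.
rewrite normrM -[b]mulr1 ler_pM // ?dotpp_le1_coord ?x1//.
Qed.

Lemma enorm_sqr x : enorm x ^+ 2 = dotp x x.
Proof. by rewrite /enorm sqr_sqrtr// dotpp_ge0. Qed.

Lemma dotpp_normalize x : x != 0 ->
  dotp ((enorm x)^-1 *: x) ((enorm x)^-1 *: x) = 1.
Proof.
rewrite -dotpp_eq0 => x0.
by rewrite dotpZl dotpZr mulrA -expr2 exprVn enorm_sqr mulVf.
Qed.

(* On the unit sphere |y - x|^2 = 2 - 2 y.x. *)
Lemma sqrt2_le_dist_sphereE x y : dotp x x = 1 -> dotp y y = 1 ->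
  (Num.sqrt 2 <= enorm (y - x)) = (dotp y x <= 0).
Proof.
move=> x1 y1.
have dist2 : dotp (y - x) (y - x) = 2 - 2 * dotp y x.
  by rewrite dotpBl !dotpBr x1 y1 (dotpC x y); ring.
rewrite /enorm dist2; have [dist_ge0|dist_lt0] := leP 0 (2 - 2 * dotp y x).
  by rewrite ler_sqrt//; apply/idP/idP => ?; lra.
rewrite (ltr0_sqrtr dist_lt0) leNgt sqrtr_gt0 ltr0n /=.
by apply/esym/idP; lra.
Qed.

Lemma lker_neq0 m n (A : 'M[R]_(m, n)) : (n < m)%N ->
  exists2 c : 'rV[R]_m, c != 0 & c *m A = 0.
Proof.
move=> nm; have kA0 : kermx A != 0.
  by rewrite -mxrank_eq0 mxrank_ker subn_eq0 -ltnNge (leq_ltn_trans (rank_leq_col A)).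
have /existsP [i ki0] : [exists i, row i (kermx A) != 0].
  apply: contraNT kA0 => /existsPn k0; apply/eqP/row_matrixP => i.
  by rewrite row0; apply/eqP/negPn/k0.
by exists (row i (kermx A)); rewrite // -row_mul mulmx_ker row0.
Qed.
Lemma rV_neq0_coord n (v : 'rV[R]_n) : v != 0 -> exists j, v 0 j != 0.
Proof.
move=> v0; apply/existsP; apply: contraNT v0 => /existsPn v0.
by apply/eqP/rowP => j; rewrite mxE; apply/eqP/negPn/v0.
Qed.

Lemma exists_orthogonal (s : seq 'rV[R]_d) : (size s < d)%N ->
  exists2 v, v != 0 & {in s, forall x, dotp v x = 0}.
Proof.
move=> sd; pose A := \matrix_(j < d, i < size s) (nth 0 s i) 0 j.
have [c c0 cA] := lker_neq0 A sd; exists c => // x xs.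
have ix : (index x s < size s)%N by rewrite index_mem.
have := congr1 (fun M : 'M[R]_(1, size s) => M 0 (Ordinal ix)) cA.
rewrite !mxE => <-; rewrite dotpE; apply: eq_bigr => j _.
by rewrite mxE /= nth_index.
Qed.

Lemma lin_dep_pos_coef m (X : 'I_m -> 'rV[R]_d) : (d < m)%N ->
  exists c : 'I_m -> R, exists2 i0, 0 < c i0 & \sum_i c i *: X i = 0.
Proof.
move=> dm; pose M := \matrix_(i, j) X i 0 j.
have [c c0 cM] := lker_neq0 M dm; have [i0 ci0] := rV_neq0_coord c0.
have cX : \sum_i c 0 i *: X i = 0.
  rewrite -[RHS]cM mulmx_sum_row; apply: eq_bigr => i _; congr (_ *: _).
  by apply/rowP => j; rewrite !mxE.
have [ci0_gt0|ci0_le0] := ltP 0 (c 0 i0); first by exists (c 0), i0.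
exists (fun i => - c 0 i), i0; first by rewrite oppr_gt0 lt_neqAle ci0 ci0_le0.
by under eq_bigr do rewrite scaleNr; rewrite sumrN cX oppr0.
Qed.

(* u . u = \sum_(i != j) p i * q j * (X i . X j) <= 0, where u is the common
   value of both sides. *)
Lemma nonacute_comb_eq0 m (X : 'I_m -> 'rV[R]_d) (p q : 'I_m -> R) :
  (forall i j, i != j -> dotp (X i) (X j) <= 0) ->
  (forall i, 0 <= p i) -> (forall i, 0 <= q i) -> (forall i, p i * q i = 0) ->
  \sum_i p i *: X i = \sum_i q i *: X i -> \sum_i p i *: X i = 0.
Proof.
move=> hX p0 q0 pq; set u := \sum_i _ => uq; apply/eqP; rewrite -dotpp_eq0.
rewrite eq_le dotpp_ge0 andbT {2}uq /u dotp_suml.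
apply: sumr_le0 => i _; rewrite dotpZl dotpC dotp_suml mulr_sumr.
apply: sumr_le0 => j _; rewrite dotpZl dotpC mulrA.
have [->|ij] := eqVneq i j; first by rewrite pq mul0r.
by apply: mulr_ge0_le0; [exact: mulr_ge0|exact: hX].
Qed.

Lemma nonacute_family_orthogonal m (X : 'I_m -> 'rV[R]_d) : (d < m)%N ->
  (forall i j, i != j -> dotp (X i) (X j) <= 0) ->
  exists i, forall y, (forall j, dotp y (X j) <= 0) -> dotp y (X i) = 0.
Proof.
move=> dm hX; have [c [i0 ci0 cX]] := lin_dep_pos_coef X dm.
pose p i := Num.max (c i) 0; pose q i := p i - c i.
have p0 i : 0 <= p i by rewrite le_max lexx orbT.
have q0 i : 0 <= q i by rewrite subr_ge0 le_max lexx.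
have pq i : p i * q i = 0.
  by rewrite /q /p; case: (leP (c i) 0) => _; rewrite ?subrr ?mulr0 ?mul0r.
have u0 : \sum_i p i *: X i = 0.
  apply: (nonacute_comb_eq0 (q := q)) => //; apply/subr0_eq; rewrite -sumrB -[RHS]cX.
  by apply: eq_bigr => i _; rewrite -scalerBl /q opprB addrC subrK.
exists i0 => y hy; have : dotp y (\sum_i p i *: X i) = 0 by rewrite u0 dotpC dotp0l.
rewrite dotpC dotp_suml => /eqP; rewrite -oppr_eq0 -sumrN psumr_eq0 => [/allP yX|i _].
  have := yX i0 (mem_index_enum _); rewrite implyTb dotpZl oppr_eq0 mulf_eq0 dotpC.
  by rewrite /p max_l ?ltW // (gt_eqF ci0) => /eqP.
by rewrite dotpZl oppr_ge0 dotpC mulr_ge0_le0.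
Qed.
End DotProduct.

Section SphereIntegral.
Variables (R : realType) (d : nat).
Implicit Types (x y z w v : 'rV[R]_d) (f : 'rV[R]_d -> \bar R).

Definition radial_ext f x : \bar R :=
  if (0 < dotp x x) && (dotp x x <= 1) then f ((enorm x)^-1 *: x) else 0%E.

Lemma sph_intE f : sph_int f = iint d (fun g => radial_ext f (\row_(i < d) g i)).
Proof. by []. Qed.

Lemma radial_ext_ge0 f x : (forall y, (0 <= f y)%E) -> (0 <= radial_ext f x)%E.
Proof. by move=> f0; rewrite /radial_ext; case: ifP. Qed.

Lemma dotp_gt0_neq0 x : 0 < dotp x x -> x != 0.
Proof. by move=> x0; rewrite -dotpp_eq0 gt_eqF. Qed.

Definition rowf v (i : nat) : R := oapp (fun j : 'I_d => v 0 j) 0 (insub i).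

Lemma rowfE v (j : 'I_d) : rowf v j = v 0 j.
Proof. by rewrite /rowf valK. Qed.

Lemma dotp_row v (g : nat -> R) :
  dotp v (\row_(i < d) g i) = \sum_(i < d) rowf v i * g i.
Proof. by rewrite dotpE; apply: eq_bigr => j _; rewrite mxE rowfE. Qed.

Lemma sph_int_ge0 f : (forall y, (0 <= f y)%E) -> (0 <= sph_int f)%E.
Proof. by move=> f0; apply: iint_ge0 => g; apply: radial_ext_ge0. Qed.

Lemma sph_int_eq0 f : (forall y, f y = 0%E) -> sph_int f = 0%E.
Proof. by move=> f0; apply: iint_eq0 => g; rewrite /radial_ext f0; case: ifP. Qed.

Lemma sph_int_eq_off_hyperplane v f1 f2 : v != 0 ->
  (forall y, (0 <= f1 y)%E) -> (forall y, (0 <= f2 y)%E) ->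
  (forall y, dotp y y = 1 -> dotp v y != 0 -> f1 y = f2 y) ->
  sph_int f1 = sph_int f2.
Proof.
move=> v0 f10 f20 f12; apply: (@ge0_eq_iint_off_hyperplane _ d (rowf v) 0).
- by have [j vj] := rV_neq0_coord v0; exists j; rewrite ?rowfE.
- by move=> g; apply: radial_ext_ge0.
- by move=> g; apply: radial_ext_ge0.
move=> g; rewrite -dotp_row /radial_ext => vg; case: ifP => // /andP[/dotp_gt0_neq0 g0 _].
apply: f12; first exact: dotpp_normalize.
by rewrite dotpZr mulf_neq0 // invr_eq0 /enorm sqrtr_eq0 -ltNge lt_def dotpp_eq0 g0 dotpp_ge0.
Qed.

Lemma sph_meas_ge0 (A : set 'rV[R]_d) : (0 <= sph_meas A)%E.
Proof. by apply: sph_int_ge0 => y; rewrite lee_fin. Qed.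

(* The cone measure is dominated by the volume of the cube [-1, 1]^d. *)
Lemma sph_meas_le_exp2 (A : set 'rV[R]_d) : (sph_meas A <= (2 ^+ d)%:E)%E.
Proof.
rewrite /sph_meas sph_intE -(@iint_cube _ d (fun=> -1) 2)//.
apply: ge0_le_iint => g.
  by apply: radial_ext_ge0 => y; rewrite lee_fin.
rewrite /radial_ext; case: ifP => [/andP[_ g1]|_]; last by rewrite lee_fin cube_indic_ge0.
have /eqP -> : cube_indic d (fun=> -1) 2 g == 1.
  apply/cube_indic_eq1P => j; have := dotpp_le1_coord j g1.
  by rewrite mxE => /ler_normlP [? ?]; apply/andP; split; lra.
by rewrite lee_fin indicE; case: (_ \in _).
Qed.

Lemma sph_meas_fin_num (A : set 'rV[R]_d) : sph_meas A \is a fin_num.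
Proof.
by rewrite ge0_fin_numE ?sph_meas_ge0// (le_lt_trans (sph_meas_le_exp2 A)) ?ltry.
Qed.

Lemma sph_meas_ge_cube (A : set 'rV[R]_d) (a : nat -> R) e : 0 <= e ->
  (forall w, (forall j : 'I_d, a j <= w 0 j <= a j + e) ->
     0 < dotp w w <= 1 /\ A ((enorm w)^-1 *: w)) ->
  ((e ^+ d)%:E <= sph_meas A)%E.
Proof.
move=> e0 hA; rewrite /sph_meas sph_intE -(iint_cube d a e0).
apply: ge0_le_iint => g.
  by rewrite lee_fin cube_indic_ge0.
have [->|c1] := cube_indic01 d a e g.
  by apply: radial_ext_ge0 => y; rewrite lee_fin.
have /cube_indic_eq1P box : cube_indic d a e g == 1 by rewrite c1.
have [w01 Aw] : 0 < dotp (\row_(i < d) g i) (\row_(i < d) g i) <= 1 /\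
    A ((enorm (\row_(i < d) g i))^-1 *: \row_(i < d) g i).
  by apply: hA => j; rewrite mxE.
by rewrite c1 /= /radial_ext w01 indicE mem_set.
Qed.

End SphereIntegral.

Section HalfspaceBox.
Variables (R : realType) (d : nat).
Implicit Types (x y z w : 'rV[R]_d) (s : seq 'rV[R]_d).

Lemma seq_lbound_gt0 (T : eqType) (s : seq T) (f : T -> R) :
  {in s, forall t, 0 < f t} -> exists2 e, 0 < e & {in s, forall t, e <= f t}.
Proof.
elim: s => [|a s IH] f_gt0; first by exists 1.
have [e e_gt0 fe] : exists2 e, 0 < e & {in s, forall t, e <= f t}.
  by apply: IH => t ts; apply: f_gt0; rewrite inE ts orbT.
exists (Num.min (f a) e); first by rewrite lt_min e_gt0 f_gt0 ?mem_head.
by move=> t; rewrite inE => /orP[/eqP ->|/fe]; rewrite ge_min ?lexx // => ->; rewrite orbT.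
Qed.

Lemma scale_coord_le z (b : R) : 0 < b ->
  exists2 k, 0 < k & forall j, `|(k *: z) 0 j| <= b.
Proof.
move=> b_gt0; pose K := 1 + \sum_j `|z 0 j|.
have K_gt0 : 0 < K by rewrite ltr_pwDl // sumr_ge0.
exists (b / K) => [|j]; first by rewrite divr_gt0.
have zK : `|z 0 j| <= K by rewrite /K (bigD1 j) //= addrCA lerDl addr_ge0 // sumr_ge0.
rewrite mxE normrM gtr0_norm ?divr_gt0 //.
by apply: le_trans (ler_wpM2l _ zK) _; rewrite ?divfK ?gt_eqF // divr_ge0 ?ltW.
Qed.

Lemma halfspace_box s z : z != 0 -> {in s, forall x, dotp x x = 1} ->
  {in s, forall x, dotp z x < 0} ->
  exists z', exists2 e, 0 < e & forall w, (forall j, `|w 0 j - z' 0 j| <= e) ->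
    0 < dotp w w <= 1 /\ {in s, forall x, dotp w x < 0}.
Proof.
move=> z0 s1 zs; have [j0 zj0] := rV_neq0_coord z0.
have d_gt0 : 0 < d%:R :> R by rewrite ltr0n (leq_ltn_trans _ (ltn_ord j0)).
pose D := d%:R^-1 : R.
have D_gt0 : 0 < D by rewrite invr_gt0.
have D_le1 : D <= 1 by rewrite invf_le1 // ler1n (leq_ltn_trans _ (ltn_ord j0)).
have [k k_gt0 kz] : exists2 k, 0 < k & forall j, `|(k *: z) 0 j| <= D / 2.
  by apply: scale_coord_le; rewrite divr_gt0.
pose z' := k *: z; have z'j0 : 0 < `|z' 0 j0| by rewrite normr_gt0 /z' mxE mulf_neq0 // gt_eqF.
have [δ δ_gt0 z's] : exists2 δ, 0 < δ & {in s, forall x, δ <= - dotp z' x}.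
  by apply: seq_lbound_gt0 => x xs; rewrite oppr_gt0 dotpZl pmulr_rlt0 ?zs.
have {}kz : forall j, `|z' 0 j| <= D / 2 by [].
clearbody z'.
pose e := Num.min (D / 2) (Num.min (`|z' 0 j0| / 2) (δ * D / 2)).
have [eD ez' eδ] : [/\ e <= D / 2, e <= `|z' 0 j0| / 2 & e <= δ * D / 2].
  by rewrite !ge_min !lexx !orbT.
exists z', e => [|w wz']; first by rewrite !lt_min !divr_gt0 ?mulr_gt0.
have wD j : `|w 0 j| <= D.
  have := ler_normD (z' 0 j) (w 0 j - z' 0 j); rewrite addrC subrK.
  by have := kz j; have := wz' j; lra.
split; [apply/andP; split|].
- apply: lt_le_trans (sqr_coord_le_dotpp w j0); rewrite -real_normK ?num_real // exprn_gt0 //.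
  have := ler_normD (w 0 j0) (z' 0 j0 - w 0 j0); rewrite addrC subrK distrC.
  by have := wz' j0; lra.
- apply: le_trans (dotpp_le_sup wD) _.
  by rewrite expr2 mulrA /D mulfV ?gt_eqF // mul1r.
move=> x xs; rewrite -(subrK z' w) dotpDl.
have de : d%:R * e <= δ / 2.
  by rewrite -ler_pdivlMl // mulrC; apply: le_trans eδ _; rewrite /D; lra.
have : `|dotp (w - z') x| <= d%:R * e.
  by apply: abs_dotp_le_sup => [j|]; [rewrite !mxE; exact: wz'|exact: s1].
by rewrite ler_norml => /andP[_ ?]; have := z's x xs; lra.
Qed.

End HalfspaceBox.

Section RSA.
Variable R : realType.

Lemma rsa_stop_prob_ge0 d (r : R) k (s : seq 'rV[R]_d) :
  (0 <= rsa_stop_prob r k s)%E.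
Proof.
elim: k s => [|k IH] s /=; first by case: ifP.
case: ifP => // _; apply: mule_ge0; first by rewrite lee_fin invr_ge0 fine_ge0 ?sph_meas_ge0.
by apply: sph_int_ge0 => y; rewrite mule_ge0 ?lee_fin.
Qed.

Lemma rsa_stop_prob_S_eq1 d (r : R) k (s : seq 'rV[R]_d) (v : 'rV[R]_d) :
  v != 0 -> (0 < sph_meas (avail r s))%E ->
  (forall y, dotp y y = 1 -> dotp v y != 0 -> avail r s y ->
     rsa_stop_prob r k (y :: s) = 1%E) ->
  rsa_stop_prob r k.+1 s = 1%E.
Proof.
move=> v0 m_gt0 next1 /=; rewrite m_gt0.
have mf := sph_meas_fin_num (avail r s).
set m := sph_meas _ in m_gt0 mf *.
suff -> : sph_int (fun y => ((\1_(avail r s) y)%:E * rsa_stop_prob r k (y :: s))%E) = m.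
  by rewrite -[in X in (_ * X)%E](fineK mf) -EFinM mulVf // gt_eqF // -lte_fin fineK.
apply: (sph_int_eq_off_hyperplane v0) => [y|y|y y1 vy].
- by rewrite mule_ge0 ?lee_fin ?rsa_stop_prob_ge0.
- by rewrite lee_fin.
rewrite indicE; case: (boolP (y \in _)) => [/set_mem ay|_]; last by rewrite mul0e.
by rewrite next1 ?mule1.
Qed.

Variable d : nat.
Implicit Types (x y z v : 'rV[R]_d) (s : seq 'rV[R]_d).

Definition nonacute s := pairwise (fun x y => dotp x y <= 0) s.

Definition in_open_halfspace s :=
  exists2 z, z != 0 & {in s, forall x, dotp z x < 0}.

Lemma avail_sqrt2P s y : {in s, forall x, dotp x x = 1} ->
  avail (Num.sqrt 2) s y <-> dotp y y = 1 /\ {in s, forall x, dotp y x <= 0}.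
Proof.
move=> s1; split => [[y1 sy]|[y1 sy]]; split => // x xs.
  by rewrite -(sqrt2_le_dist_sphereE (s1 x xs) y1) sy.
by rewrite (sqrt2_le_dist_sphereE (s1 x xs) y1) sy.
Qed.

Lemma sph_meas_avail_gt0 s : {in s, forall x, dotp x x = 1} ->
  in_open_halfspace s -> (0 < sph_meas (avail (Num.sqrt 2) s))%E.
Proof.
move=> s1 [z z0 zs]; have [z' [e e_gt0 box]] := halfspace_box z0 s1 zs.
apply: (@lt_le_trans _ _ (((e *+ 2) ^+ d)%:E)); first by rewrite lte_fin exprn_gt0 ?mulrn_wgt0.
apply: (sph_meas_ge_cube (a := fun i => rowf z' i - e)) => [|w w_box].
  by rewrite mulrn_wge0 ?ltW.
have [/andP[w_gt0 w_le1] ws] : 0 < dotp w w <= 1 /\ {in s, forall x, dotp w x < 0}.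
  apply: box => j; have := w_box j; rewrite rowfE ler_distl => /andP[? ?].
  by apply/andP; split; lra.
split; first by rewrite w_gt0.
apply/avail_sqrt2P => //; split; first exact/dotpp_normalize/dotp_gt0_neq0.
move=> x xs; rewrite dotpZl pmulr_rle0 ?ltW ?ws // invr_gt0 /enorm sqrtr_gt0 //.
Qed.

Lemma sph_meas_avail_eq0 s : (d < size s)%N -> {in s, forall x, dotp x x = 1} ->
  nonacute s -> sph_meas (avail (Num.sqrt 2) s) = 0%E.
Proof.
move=> ds s1 /(pairwiseP 0) ns; pose X (i : 'I_(size s)) := nth 0 s i.
have [i0 Xi0] : exists i, forall y, (forall j, dotp y (X j) <= 0) -> dotp y (X i) = 0.
  apply: nonacute_family_orthogonal => // i j; rewrite neq_ltn => /orP[] ij.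
    exact: ns (ltn_ord i) (ltn_ord j) ij.
  by rewrite dotpC; exact: ns (ltn_ord j) (ltn_ord i) ij.
have Xs i : X i \in s by rewrite mem_nth.
rewrite /sph_meas (@sph_int_eq_off_hyperplane _ _ (X i0) _ (fun=> 0%E)) ?sph_int_eq0 //.
  by rewrite -dotpp_eq0 s1 ?oner_neq0.
move=> y _ Xy; rewrite indicE; case: (boolP (y \in _)) => // /set_mem /avail_sqrt2P.
case=> // _ ys; move: Xy; rewrite dotpC Xi0 ?eqxx // => j; exact: ys.
Qed.

Lemma in_open_halfspace_cons s y v : in_open_halfspace s ->
  {in s, forall x, dotp v x = 0} -> dotp v y != 0 -> in_open_halfspace (y :: s).
Proof.
move=> [z z0 zs] vs vy; pose z' := z + (- (`|dotp z y| + 1) / dotp v y) *: v.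
have z'y : dotp z' y < 0 by rewrite dotpDl dotpZl divfK //; have := ler_norm (dotp z y); lra.
exists z'; first by apply: contraTneq z'y => ->; rewrite dotp0l ltxx.
by move=> x; rewrite inE => /orP[/eqP -> //|xs]; rewrite dotpDl dotpZl (vs x xs) mulr0 addr0 zs.
Qed.

Lemma rsa_stop_prob_sqrt2 k s : (size s + k = d.+1)%N ->
  {in s, forall x, dotp x x = 1} -> nonacute s ->
  ((size s <= d)%N -> in_open_halfspace s) ->
  rsa_stop_prob (Num.sqrt 2) k s = 1%E.
Proof.
elim: k s => [|k IH] s sk s1 ns hs.
  by rewrite /= sph_meas_avail_eq0 ?ltxx // -sk addn0.
have sd : (size s <= d)%N by rewrite -ltnS -sk addnS ltnS leq_addr.
have [z z0 zs] := hs sd.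
have [v v0 sv] : exists2 v, v != 0 & ((size s < d)%N -> {in s, forall x, dotp v x = 0}).
  by case: ltnP => [/exists_orthogonal [v v0 sv]|_]; [exists v|exists z].
apply: (rsa_stop_prob_S_eq1 v0 (sph_meas_avail_gt0 s1 (ex_intro2 _ _ z z0 zs))).
move=> y _ vy /avail_sqrt2P -/(_ s1) [y1 ys]; apply: IH => //.
- by rewrite /= addSnnS.
- by move=> x; rewrite inE => /orP[/eqP ->|/s1].
- by rewrite /nonacute /= -/(nonacute s) ns andbT; apply/allP => x /ys.
by move=> ysd; apply: in_open_halfspace_cons (hs sd) (sv ysd) vy.
Qed.

End RSA.

Theorem theorem1 (R : realType) (d : nat) (hd : (2 <= d)%N) :
  rsa_stop_prob (R := R) (d := d) (Num.sqrt 2) d.+1 [::] = 1%E.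
Proof.
apply: rsa_stop_prob_sqrt2 => // _.
exists (\row_(i < d) 1) => //; apply/eqP => /rowP /(_ (Ordinal (ltnW hd))).
by rewrite !mxE => /eqP; rewrite oner_eq0.
Qed.
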